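(* Let $q\geq3$, $\Delta\geq3$ and $0\leq B<\frac{\Delta-q}{\Delta}$. For the antiferromagnetic $q$-state Potts model with parameter $B$, the global maximum of $\Psi_1$ is not achieved at the translation invariant fixpoint, i.e., not at $\boldsymbol{\alpha}=\boldsymbol{\beta}=(1/q,\dots,1/q)$.
   Context: The Potts model with parameter $B$ has interaction matrix $\mathbf{B}$ with diagonal entries $B$ and off-diagonal entries $1$. $\Psi_1$ is defined on pairs of probability vectors by $\Psi_1(\boldsymbol{\alpha},\boldsymbol{\beta})=\max_{\mathbf{x}}[(\Delta-1)(\sum_i\alpha_i\ln\alpha_i+\sum_j\beta_j\ln\beta_j)+\Delta\sum_{i,j}x_{ij}(\ln B_{ij}-\ln x_{ij})]$ over nonnegative $\mathbf{x}\in\mathbb{R}^{q\times q}$ with row sums $\alpha_i$ and column sums $\beta_j$ (conventions $\ln0=-\infty$, $0\ln0=0$); it is the exponential growth rate of the expected weight of configurations with spin frequencies $\boldsymbol{\alpha},\boldsymbol{\beta}$ on the two sides of a random $\Delta$-regular bipartite graph. The translation invariant fixpoint of the Potts tree recursions $R_i\propto(BC_i+\sum_{j\neq i}C_j)^{\Delta-1}$, $C_j\propto(BR_j+\sum_{i\neq j}R_i)^{\Delta-1}$ is the one with all $R_i$ equal and all $C_j$ equal, corresponding to $\boldsymbol{\alpha}=\boldsymbol{\beta}=(1/q,\dots,1/q)$. *)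

From mathcomp Require Import all_boot all_order all_algebra.
From mathcomp Require Import all_classical all_reals all_analysis.
Set Implicit Arguments. Unset Strict Implicit. Unset Printing Implicit Defensive.
Import Order.TTheory GRing.Theory Num.Theory.
Local Open Scope ring_scope.
Local Open Scope classical_set_scope.

Section Potts.
Variable R : realType.

Definition potts_mx (q : nat) (B : R) : 'M[R]_q :=
  \matrix_(i, j) if i == j then B else 1.

Definition is_prob (q : nat) (a : 'I_q -> R) : Prop :=
  (forall i, 0 <= a i) /\ \sum_i a i = 1.

Definition unif (q : nat) : 'I_q -> R := fun _ => (q%:R)^-1.

Definition couplings (q : nat) (a b : 'I_q -> R) : set 'M[R]_q :=
  [set x | (forall i j, 0 <= x i j) /\ (forall i, \sum_j x i j = a i)
                                    /\ (forall j, \sum_i x i j = b j)].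

Definition xlog_term (b x : R) : \bar R :=
  if x == 0 then 0%E
  else if b == 0 then -oo%E
  else (x * (ln b - ln x))%:E.

Definition negent (q : nat) (a : 'I_q -> R) : R :=
  \sum_i (if a i == 0 then 0 else a i * ln (a i)).

Definition Psi1_obj (q Delta : nat) (B : R) (a b : 'I_q -> R) (x : 'M[R]_q)
  : \bar R :=
  (((Delta%:R - 1) * (negent a + negent b))%:E
   + (Delta%:R)%:E * \sum_i \sum_j xlog_term (potts_mx q B i j) (x i j))%E.

Definition Psi1 (q Delta : nat) (B : R) (a b : 'I_q -> R) : \bar R :=
  ereal_sup [set Psi1_obj Delta B a b x | x in couplings a b].

End Potts.

(** The uniform point is not even a local maximum.  Perturb the marginals to
    [(1 + e s_i)/q] and [(1 - e s_i)/q] with [sum s = 0], and couple them by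
    [x_ij = B_ij (1 + e (Z/q) (s_i - s_j)) / (q Z)], where [Z = q - 1 + B] is the
    common row sum of the Potts matrix.  At the uniform point Gibbs' inequality
    gives [Psi_1 = -2 (Delta - 1) ln q + Delta ln (q Z)].  The bounds
    [(t-1)^2/(2(1+e)) <= t ln t - (t-1) <= (t-1)^2/(2(1-e))] on [[1-e, 1+e]] show
    that the perturbation gains about [(Delta - 1) e^2 |s|^2 / q] in entropy and
    loses at most about [Delta Z e^2 |s|^2 / q^2] in the coupling term; the gain
    wins for small [e] exactly when [q (Delta - 1) > Delta Z], i.e. when
    [B < (Delta - q) / Delta]. *)

From mathcomp Require Import all_boot all_order all_algebra.
From mathcomp Require Import all_classical all_reals all_analysis.
From mathcomp Require Import ring lra.
Import Order.TTheory GRing.Theory Num.Theory.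
Import numFieldNormedType.Exports.
Local Open Scope ring_scope.

Section LnBounds.
Context {R : realType}.
Implicit Types e k t : R.

Lemma ln_le_subr1 t : 0 < t -> ln t <= t - 1.
Proof. by move=> t0; have := @le_ln1Dx R (t - 1); rewrite [1 + _]addrC subrK; apply; lra. Qed.

Lemma divr_subr1_le_ln t : 0 < t -> (t - 1) / t <= ln t.
Proof.
move=> t0; have := @ln_le_subr1 t^-1; rewrite invr_gt0 => /(_ t0).
by rewrite lnV ?posrE // mulrBl mulfV ?gt_eqF // mul1r; lra.
Qed.

Lemma min_at1_derive_sign (f df : R -> R) (a b : R) : 0 < a ->
  (forall t, 0 < t -> is_derive t 1 f (df t)) ->
  (forall t, a <= t <= 1 -> df t <= 0) -> (forall t, 1 <= t <= b -> 0 <= df t) ->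
  forall t, a <= t <= b -> f 1 <= f t.
Proof.
move=> a0 hd hneg hpos t /andP[ta tb].
have cont u v : 0 < u -> {within [set` (`[u, v]%R : interval R)], continuous f}%classic.
  move=> u0; apply: derivable_within_continuous => x.
  rewrite in_itv /= => /andP[ux _]; apply: ex_derive; apply: hd.
  exact: lt_le_trans u0 ux.
have [t1|t1] := leP 1 t.
  have [c|c cin E] := @MVT_segment R f df 1 t t1 _ (cont 1 t ltr01).
    by rewrite in_itv /= => /andP[c1 _]; apply: hd; exact: lt_trans ltr01 c1.
  move: cin; rewrite in_itv /= => /andP[c1 ct].
  by rewrite -subr_ge0 E mulr_ge0 ?subr_ge0 // hpos // c1 (le_trans ct).
have t0 : 0 < t by exact: lt_le_trans a0 ta.
have [c|c cin] := @MVT_segment R f df t 1 (ltW t1) _ (cont t 1 t0).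
  by rewrite in_itv /= => /andP[tc _]; apply: hd; exact: lt_trans t0 tc.
move: cin; rewrite in_itv /= => /andP[tc c1] H.
rewrite -subr_ge0 -opprB H oppr_ge0 mulr_le0_ge0 ?subr_ge0 ?(ltW t1) // hneg //.
by rewrite c1 (le_trans ta).
Qed.

Definition xlnx_quad_gap k t := t * ln t - (t - 1) - (t - 1) ^+ 2 / (2 * k).

Lemma is_derive_xlnx_quad_gap k t : 0 < t -> k != 0 ->
  is_derive t 1 (xlnx_quad_gap k) (ln t - (t - 1) / k).
Proof.
move=> t0 k0; have := is_derive1_ln t0 => ?; apply: is_derive_eq.
by rewrite /GRing.scale /=; field; rewrite k0 gt_eqF.
Qed.

Lemma xlnx_quad_gap1 k : xlnx_quad_gap k 1 = 0.
Proof. by rewrite /xlnx_quad_gap ln1 subrr expr0n /=; lra. Qed.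

Lemma xlnx_ge_quad e t : 0 <= e < 1 -> 1 - e <= t <= 1 + e ->
  (t - 1) + (t - 1) ^+ 2 / (2 * (1 + e)) <= t * ln t.
Proof.
move=> /andP[e0 e1] te; have k0 : 1 + e != 0 by rewrite gt_eqF //; lra.
suff : 0 <= xlnx_quad_gap (1 + e) t by rewrite /xlnx_quad_gap; lra.
rewrite -(xlnx_quad_gap1 (1 + e)).
apply: (@min_at1_derive_sign _ _ (1 - e) (1 + e) _
  (fun u u0 => is_derive_xlnx_quad_gap _ _ u0 k0) _ _ t te).
- lra.
- move=> u /andP[u1 u2]; have := @ln_le_subr1 u.
  have : u - 1 <= (u - 1) / (1 + e) by rewrite ler_pdivlMr; nra.
  lra.
- move=> u /andP[u1 u2]; have := @divr_subr1_le_ln u.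
  have : (u - 1) / (1 + e) <= (u - 1) / u by apply: ler_wpM2l; rewrite ?lef_pV2 ?posrE; lra.
  lra.
Qed.

Lemma xlnx_le_quad e t : 0 <= e < 1 -> 1 - e <= t <= 1 + e ->
  t * ln t <= (t - 1) + (t - 1) ^+ 2 / (2 * (1 - e)).
Proof.
move=> /andP[e0 e1] te; have k0 : 1 - e != 0 by rewrite gt_eqF //; lra.
suff : xlnx_quad_gap (1 - e) t <= 0 by rewrite /xlnx_quad_gap; lra.
rewrite -(xlnx_quad_gap1 (1 - e)) -lerN2.
apply: (@min_at1_derive_sign (fun u => - xlnx_quad_gap (1 - e) u) _ (1 - e) (1 + e) _
  (fun u u0 => is_deriveN (is_derive_xlnx_quad_gap _ _ u0 k0)) _ _ t te).
- lra.
- move=> u /andP[u1 u2]; have := @divr_subr1_le_ln u.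
  have : (u - 1) / (1 - e) <= (u - 1) / u by apply: ler_wnM2l; rewrite ?lef_pV2 ?posrE; lra.
  lra.
- move=> u /andP[u1 u2]; have := @ln_le_subr1 u.
  have : u - 1 <= (u - 1) / (1 - e) by rewrite ler_pdivlMr; nra.
  lra.
Qed.

End LnBounds.

Section Gibbs.
Context {R : realType}.
Local Open Scope ereal_scope.

Lemma xlog_term_le (b x K : R) : (0 < K)%R -> (0 <= b)%R -> (0 <= x)%R ->
  xlog_term b x <= (x * ln K + b / K - x)%:E.
Proof.
move=> K0 b0 x0; rewrite /xlog_term.
have [->|xn0] := eqVneq x 0%R.
  by rewrite lee_fin mul0r add0r subr0 divr_ge0 // ltW.
have [->|bn0] := eqVneq b 0%R; first by rewrite leNye.
have xp : (0 < x)%R by rewrite lt_def xn0.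
have bp : (0 < b)%R by rewrite lt_def bn0.
have w0 : (0 < b / (x * K))%R by rewrite divr_gt0 // mulr_gt0.
have := ler_wpM2l (ltW xp) (ln_le_subr1 _ w0).
rewrite ln_div ?posrE ?mulr_gt0 // lnM ?posrE // lee_fin.
have -> : (x * (b / (x * K) - 1) = b / K - x)%R by field; rewrite !gt_eqF.
by rewrite !mulrDr !mulrN; lra.
Qed.

Lemma xlog_term_scaled (b y K : R) : (0 < K)%R -> (0 <= b)%R -> (0 < y)%R ->
  xlog_term b (b * y / K) = (b / K * (y * ln K - y * ln y))%:E.
Proof.
move=> K0 b0 y0; rewrite /xlog_term.
have [->|bn0] := eqVneq b 0%R; first by rewrite !mul0r eqxx.
have bp : (0 < b)%R by rewrite lt_def bn0.
rewrite gt_eqF ?divr_gt0 ?mulr_gt0 // ln_div ?posrE ?mulr_gt0 // lnM ?posrE //.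
by congr (_%:E); field; rewrite gt_eqF.
Qed.

End Gibbs.

Section PottsSums.
Context {R : realType} {q : nat}.
Variable B : R.
Implicit Types (i j : 'I_q) (f : 'I_q -> R).

Lemma potts_mx_ge0 i j : 0 <= B -> 0 <= potts_mx q B i j.
Proof. by rewrite mxE; case: eqP. Qed.

Lemma potts_mx_sym i j : potts_mx q B i j = potts_mx q B j i.
Proof. by rewrite !mxE eq_sym. Qed.

Lemma sum_potts_row i f :
  \sum_j potts_mx q B i j * f j = \sum_j f j + (B - 1) * f i.
Proof.
rewrite (bigD1 i) //= [in RHS](bigD1 i) //= mxE eqxx.
rewrite (eq_bigr f) => [|j ji]; last by rewrite mxE eq_sym (negbTE ji) mul1r.
ring.
Qed.

Lemma sum_potts_col j f :
  \sum_i potts_mx q B i j * f i = \sum_i f i + (B - 1) * f j.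
Proof.
rewrite -sum_potts_row; apply: eq_bigr => i _; by rewrite potts_mx_sym.
Qed.

(* The diagonal of the Potts matrix is where [s i - s j] vanishes. *)
Lemma sum_potts_diff (g : R -> R) (s : 'I_q -> R) :
  \sum_i \sum_j potts_mx q B i j * g (s i - s j) =
  \sum_i \sum_j g (s i - s j) + (B - 1) * q%:R * g 0.
Proof.
under eq_bigr => i _ do rewrite (sum_potts_row i (fun j => g (s i - s j))) subrr.
by rewrite big_split /= sumr_const card_ord [_ * _ * g 0]mulrAC mulr_natr.
Qed.

Lemma sum_potts_mx : \sum_i \sum_j potts_mx q B i j = q%:R * (q%:R - 1 + B).
Proof.
have := sum_potts_diff (fun=> 1) (fun=> 0).
under eq_bigr do under eq_bigr do rewrite mulr1.
move=> ->; rewrite !sumr_const !card_ord -mulr_natr; ring.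
Qed.

End PottsSums.

Section DiffSums.
Context {R : realType} {q : nat}.
Implicit Type s : 'I_q -> R.

Lemma sum_diff_eq0 s : \sum_i \sum_j (s i - s j) = 0.
Proof. by under eq_bigr do rewrite sumrB; rewrite sumrB exchange_big subrr. Qed.

Lemma sum_sqr_diff s :
  \sum_i \sum_j (s i - s j) ^+ 2 = 2 * (q%:R * \sum_i s i ^+ 2 - (\sum_i s i) ^+ 2).
Proof.
have E i j : (s i - s j) ^+ 2 = s i ^+ 2 + s j ^+ 2 - 2 * (s i * s j) by ring.
under eq_bigr => i _ do under eq_bigr => j _ do rewrite E.
under eq_bigr => i _ do
  rewrite sumrB big_split /= sumr_const card_ord -mulr_sumr -mulr_sumr.
rewrite sumrB big_split /= sumr_const card_ord sumrMnl -mulr_sumr -mulr_suml.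
ring.
Qed.

End DiffSums.

Section Entropy.
Context {R : realType}.

Lemma negent_div q (w : 'I_q -> R) : (0 < q)%N ->
  (forall i, 0 < w i) -> \sum_i w i = q%:R ->
  negent (fun i => w i / q%:R) = (\sum_i w i * ln (w i)) / q%:R - ln q%:R.
Proof.
move=> q0 w0 sw; have qp : 0 < q%:R :> R by rewrite ltr0n.
rewrite /negent (eq_bigr (fun i => (w i * ln (w i) - w i * ln q%:R) / q%:R)).
  by rewrite -mulr_suml sumrB -mulr_suml sw; field; rewrite gt_eqF.
by move=> i _; rewrite gt_eqF ?divr_gt0 // ln_div ?posrE //; field; rewrite gt_eqF.
Qed.

Lemma negent_unif q : (0 < q)%N -> negent (@unif R q) = - ln q%:R.
Proof.
move=> q0; have := @negent_div q (fun=> 1) q0 (fun=> ltr01).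
rewrite sumr_const card_ord => /(_ erefl).
by rewrite ln1 mulr0 big1 // mul0r sub0r div1r.
Qed.

Local Open Scope ereal_scope.

(* Gibbs' inequality: the sum is maximal at the coupling proportional to the Potts matrix. *)
Lemma Psi1_le q Delta B (a b : 'I_q -> R) : (1 < q)%N -> (0 <= B)%R ->
  (\sum_i a i = 1)%R ->
  Psi1 Delta B a b <=
  ((Delta%:R - 1) * (negent a + negent b) + Delta%:R * ln (q%:R * (q%:R - 1 + B)))%:E.
Proof.
move=> q1 B0 sa; set K := (q%:R * _)%R.
have q1R : (1 < q%:R :> R)%R by rewrite ltr1n.
have K0 : (0 < K)%R by rewrite mulr_gt0 //; lra.
apply: ub_ereal_sup => _ [x [x0 [rows _]] <-].
rewrite /Psi1_obj EFinD !EFinM; apply: leeD2l.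
apply: lee_wpmul2l; first by rewrite lee_fin ler0n.
apply: (@le_trans _ _ (\sum_i \sum_j (x i j * ln K + potts_mx q B i j / K - x i j)%:E)).
  by do 2!apply: lee_sum => ? _; apply: xlog_term_le; rewrite ?potts_mx_ge0.
under eq_bigr do rewrite sumEFin.
rewrite sumEFin lee_fin le_eqVlt; apply/orP; left; apply/eqP.
under eq_bigr do rewrite sumrB big_split /= -mulr_suml -mulr_suml rows.
by rewrite sumrB big_split /= -!mulr_suml sa sum_potts_mx -/K divff ?gt_eqF // mul1r addrK.
Qed.

End Entropy.

Lemma sum_unif {R : realType} q : (0 < q)%N -> \sum_i @unif R q i = 1.
Proof.
move=> q0; rewrite /unif sumr_const card_ord -(mulr_natr q%:R^-1).
by rewrite mulVf // pnatr_eq0 -lt0n.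
Qed.

Section Perturbation.
Context {R : realType} {q : nat}.
Variables (B e : R) (s : 'I_q -> R).
Hypotheses (q_gt1 : (1 < q)%N) (B_ge0 : 0 <= B) (B_le1 : B <= 1).
Hypotheses (e_ge0 : 0 <= e) (e_lt1 : e < 1).
Hypotheses (s_sum0 : \sum_i s i = 0) (s_bound : forall i, -1 <= s i <= 1)
  (s_diff_bound : forall i j, -1 <= s i - s j <= 1).

(* [lra] ignores section hypotheses: they are pushed on the goal before calling it. *)

Local Notation qR := (q%:R : R).
Local Notation Z := (qR - 1 + B).
Local Notation S2 := (\sum_i s i ^+ 2).

Let qR_gt1 : 1 < qR. Proof. by rewrite ltr1n. Qed.
Let Z_gt0 : 0 < Z. Proof. by have := qR_gt1; have := B_ge0; lra. Qed.
Let K_gt0 : 0 < qR * Z. Proof. by rewrite mulr_gt0 //; have := qR_gt1; lra. Qed.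

Definition pert_prob (k : R) : 'I_q -> R := fun i => (1 + k * s i) / qR.

(* The factor [Z / qR] makes the row and column sums of [pert_coupling]
   equal to the perturbed marginals [pert_prob e] and [pert_prob (- e)]. *)
Definition pert_ratio i j : R := 1 + e * (Z / qR) * (s i - s j).

Definition pert_coupling : 'M[R]_q :=
  \matrix_(i, j) (potts_mx q B i j * pert_ratio i j / (qR * Z)).

Lemma pert_bound k i : -e <= k <= e -> 1 - e <= 1 + k * s i <= 1 + e.
Proof. by move=> /andP[k1 k2]; have /andP[s1 s2] := s_bound i; apply/andP; split; nra. Qed.

Lemma pert_prob_is_prob k : -e <= k <= e -> is_prob (pert_prob k).
Proof.
move=> ke; split=> [i|].
  by rewrite divr_ge0 ?ler0n //; have := pert_bound k i ke; have := e_lt1; lra.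
rewrite -mulr_suml big_split /= -mulr_sumr s_sum0 mulr0 addr0 sumr_const card_ord.
by rewrite -[1 *+ q]/qR divff ?gt_eqF //; have := qR_gt1; lra.
Qed.

Lemma pert_ratio_bound i j : 1 - e <= pert_ratio i j <= 1 + e.
Proof.
have c0 : 0 < Z / qR by rewrite divr_gt0 //; have := qR_gt1; lra.
have c1 : Z / qR <= 1 by rewrite ler_pdivrMr ?mul1r; have := qR_gt1; have := B_le1; lra.
have /andP[d1 d2] := s_diff_bound i j.
have /andP[h1 h2] : -1 <= Z / qR * (s i - s j) <= 1 by apply/andP; split; nra.
have := e_ge0; rewrite /pert_ratio -mulrA => e0; apply/andP; split; nra.
Qed.

Lemma pert_coupling_in : couplings (pert_prob e) (pert_prob (- e)) pert_coupling.
Proof.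
have qR0 : qR != 0 by rewrite gt_eqF //; have := qR_gt1; lra.
have Z0 : Z != 0 by rewrite gt_eqF.
split; [|split].
- move=> i j; rewrite mxE divr_ge0 ?mulr_ge0 ?potts_mx_ge0 ?ler0n ?(ltW Z_gt0) //.
  by have := pert_ratio_bound i j; have := e_lt1; lra.
- move=> i; under eq_bigr do rewrite mxE.
  rewrite -mulr_suml sum_potts_row /pert_ratio big_split /= -mulr_sumr sumrB.
  rewrite s_sum0 !sumr_const card_ord -[1 *+ q]/qR -(mulr_natr (s i)) subr0.
  by rewrite /pert_prob; field; apply/andP.
- move=> j; under eq_bigr do rewrite mxE.
  rewrite -mulr_suml sum_potts_col /pert_ratio big_split /= -mulr_sumr sumrB.
  rewrite s_sum0 !sumr_const card_ord -[1 *+ q]/qR -(mulr_natr (s j)) sub0r.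
  by rewrite /pert_prob; field; apply/andP.
Qed.

Lemma negent_pert_ge :
  - ln qR - ln qR + e ^+ 2 * S2 / (qR * (1 + e)) <=
  negent (pert_prob e) + negent (pert_prob (- e)).
Proof.
have qR0 : 0 < qR by have := qR_gt1; lra.
have he : 0 <= e < 1 by rewrite e_ge0 e_lt1.
have negent_pert k : -e <= k <= e -> negent (pert_prob k) =
    (\sum_i (1 + k * s i) * ln (1 + k * s i)) / qR - ln qR.
  move=> ke; apply: negent_div; first exact: ltn_trans q_gt1.
    by move=> i; have := pert_bound k i ke; lra.
  by rewrite big_split /= -mulr_sumr s_sum0 mulr0 addr0 sumr_const card_ord.
have ke : -e <= e <= e by rewrite lexx andbT; have := e_ge0; lra.
have kNe : -e <= - e <= e by rewrite lexx /=; have := e_ge0; lra.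
rewrite (negent_pert e ke) (negent_pert (- e) kNe).
suff H : e ^+ 2 * S2 / (1 + e) <= \sum_i ((1 + e * s i) * ln (1 + e * s i)
    + (1 + - e * s i) * ln (1 + - e * s i)).
  have -> : e ^+ 2 * S2 / (qR * (1 + e)) = e ^+ 2 * S2 / (1 + e) / qR.
    by field; rewrite !gt_eqF //; lra.
  have qV : 0 <= qR^-1 by rewrite invr_ge0 ltW.
  have := ler_wpM2r qV H.
  by rewrite big_split /= mulrDl; lra.
rewrite mulr_sumr mulr_suml; apply: ler_sum => i _.
have sqE k : (1 + k * s i - 1) ^+ 2 / (2 * (1 + e)) = k ^+ 2 * s i ^+ 2 / (1 + e) / 2.
  by field; have := e_ge0; lra.
have := xlnx_ge_quad _ _ he (pert_bound e i ke).
have := xlnx_ge_quad _ _ he (pert_bound (- e) i kNe).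
by rewrite !sqE sqrrN; lra.
Qed.

Lemma sum_potts_pert_ratio :
  \sum_i \sum_j potts_mx q B i j * pert_ratio i j = qR * Z.
Proof.
rewrite /pert_ratio (sum_potts_diff B (fun d => 1 + e * (Z / qR) * d) s) /=.
under eq_bigr do rewrite big_split /= -mulr_sumr.
rewrite big_split /= -mulr_sumr sum_diff_eq0 !sumr_const !card_ord -[1 *+ q]/qR.
by rewrite -mulr_natr; ring.
Qed.

Lemma sum_xlog_pert_ge :
  ((ln (qR * Z) - e ^+ 2 * Z * S2 / (qR ^+ 2 * (1 - e)))%:E <=
  (\sum_i \sum_j xlog_term (potts_mx q B i j) (pert_coupling i j))%E)%E.
Proof.
set K := qR * Z; set c := e * (Z / qR).
have y0 i j : 0 < pert_ratio i j by have := pert_ratio_bound i j; have := e_lt1; lra.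
have E i j : xlog_term (potts_mx q B i j) (pert_coupling i j) =
    (potts_mx q B i j / K * (pert_ratio i j * ln K - pert_ratio i j * ln (pert_ratio i j)))%:E.
  by rewrite [pert_coupling _ _]mxE xlog_term_scaled ?potts_mx_ge0.
rewrite (eq_bigr _ (fun i _ => eq_bigr _ (fun j _ => E i j))).
under eq_bigr do rewrite sumEFin.
rewrite sumEFin lee_fin.
pose HB := \sum_i \sum_j potts_mx q B i j * (pert_ratio i j * ln (pert_ratio i j)).
have -> : \sum_i \sum_j potts_mx q B i j / K *
    (pert_ratio i j * ln K - pert_ratio i j * ln (pert_ratio i j)) =
    (\sum_i \sum_j potts_mx q B i j * pert_ratio i j) * ln K / K - HB / K.
  rewrite /HB !mulr_suml -sumrB; apply: eq_bigr => i _.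
  by rewrite !mulr_suml -sumrB; apply: eq_bigr => j _; ring.
rewrite sum_potts_pert_ratio -/K [K * _ / K]mulrAC divff ?gt_eqF // mul1r.
suff : HB <= c ^+ 2 * qR * S2 / (1 - e).
  have -> : e ^+ 2 * Z * S2 / (qR ^+ 2 * (1 - e)) = c ^+ 2 * qR * S2 / (1 - e) / K.
    by rewrite /c /K; field; rewrite !gt_eqF //; have := qR_gt1; have := e_lt1; lra.
  have KV : 0 <= K^-1 by rewrite invr_ge0 ltW.
  by move/(ler_wpM2r KV); lra.
pose g d := c * d + c ^+ 2 / (2 * (1 - e)) * d ^+ 2.
have HBg i j : potts_mx q B i j * (pert_ratio i j * ln (pert_ratio i j)) <=
    potts_mx q B i j * g (s i - s j).
  rewrite ler_wpM2l ?potts_mx_ge0 //.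
  have -> : g (s i - s j) = (pert_ratio i j - 1) + (pert_ratio i j - 1) ^+ 2 / (2 * (1 - e)).
    by rewrite /g /pert_ratio -/c; ring.
  by apply: xlnx_le_quad; [rewrite e_ge0 e_lt1 | exact: pert_ratio_bound].
apply: le_trans (ler_sum _ (fun i _ => ler_sum _ (fun j _ => HBg i j))) _.
rewrite sum_potts_diff.
under eq_bigr do rewrite big_split /= -!mulr_sumr.
rewrite big_split /= -!mulr_sumr sum_diff_eq0 sum_sqr_diff s_sum0 /g.
rewrite expr0n /= subr0 !(mulr0, addr0) add0r.
suff -> : c ^+ 2 / (2 * (1 - e)) * (2 * (qR * S2)) = c ^+ 2 * qR * S2 / (1 - e) by [].
by field; have := e_lt1; lra.
Qed.

Lemma Psi1_obj_pert_ge (Delta : nat) : (1 <= Delta)%N ->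
  (((Delta%:R - 1) * (- ln qR - ln qR) + Delta%:R * ln (qR * Z)
    + e ^+ 2 * S2 / (qR ^+ 2 * (1 - e ^+ 2)) *
      ((1 - e) * (qR * (Delta%:R - 1)) - (1 + e) * (Delta%:R * Z)))%:E <=
  Psi1_obj Delta B (pert_prob e) (pert_prob (- e)) pert_coupling)%E.
Proof.
move=> D1; have D0 : 0 <= Delta%:R - 1 :> R by rewrite subr_ge0 ler1n.
have entropy : (((Delta%:R - 1) * (- ln qR - ln qR + e ^+ 2 * S2 / (qR * (1 + e))))%:E <=
    ((Delta%:R - 1) * (negent (pert_prob e) + negent (pert_prob (- e))))%:E)%E.
  by rewrite lee_fin ler_wpM2l // negent_pert_ge.
have energy : ((Delta%:R * (ln (qR * Z) - e ^+ 2 * Z * S2 / (qR ^+ 2 * (1 - e))))%:E <=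
    (Delta%:R)%:E * \sum_i \sum_j xlog_term (potts_mx q B i j) (pert_coupling i j))%E.
  by rewrite EFinM lee_wpmul2l ?lee_fin ?ler0n // sum_xlog_pert_ge.
apply: le_trans (leeD entropy energy); rewrite -EFinD lee_fin le_eqVlt; apply/orP; left.
have := e_ge0; have := e_lt1; have := qR_gt1 => *.
by apply/eqP; field; rewrite !gt_eqF //; nra.
Qed.

Lemma Psi1_unif_lt_pert (Delta : nat) : (1 <= Delta)%N -> 0 < e -> 0 < S2 ->
  (1 + e) * (Delta%:R * Z) < (1 - e) * (qR * (Delta%:R - 1)) ->
  (Psi1 Delta B (@unif R q) (@unif R q) < Psi1 Delta B (pert_prob e) (pert_prob (- e)))%E.
Proof.
move=> D1 e_gt0 S2_gt0 margin.
apply: le_lt_trans (Psi1_le _ _ _ _ _ q_gt1 B_ge0 (sum_unif q (ltnW q_gt1))) _.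
rewrite negent_unif ?(ltnW q_gt1) //.
have sup : (Psi1_obj Delta B (pert_prob e) (pert_prob (- e)) pert_coupling
    <= Psi1 Delta B (pert_prob e) (pert_prob (- e)))%E.
  by apply: ereal_sup_ubound; exists pert_coupling; first exact: pert_coupling_in.
apply: lt_le_trans (le_trans (Psi1_obj_pert_ge _ D1) sup); rewrite lte_fin ltrDl.
have := e_lt1; have := qR_gt1 => *.
by rewrite mulr_gt0 ?subr_gt0 // divr_gt0 ?mulr_gt0 ?exprn_gt0 //; nra.
Qed.

End Perturbation.

Section CenteredIndicator.
Context {R : realType} {q : nat}.
Variable i0 : 'I_q.

Definition centered_indicator : 'I_q -> R := fun i => (i == i0)%:R - q%:R^-1.

Lemma sum_centered_indicator : \sum_i centered_indicator i = 0.
Proof.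
have q0 : (0 < q)%N by exact: leq_ltn_trans (ltn_ord i0).
rewrite sumrB sumr_const card_ord -(mulr_natr q%:R^-1) mulVf ?pnatr_eq0 -?lt0n //.
by rewrite (bigD1 i0) //= eqxx big1 ?addr0 ?subrr // => i /negbTE ->.
Qed.

Lemma centered_indicator_bound i : -1 <= centered_indicator i <= 1.
Proof.
have q1 : 1 <= q%:R :> R by rewrite ler1n (leq_ltn_trans _ (ltn_ord i0)).
have qV : 0 < (q%:R : R)^-1 <= 1 by rewrite invr_gt0 invr_le1 ?unitfE; lra.
by rewrite /centered_indicator; case: (i == i0) => /=; lra.
Qed.

Lemma centered_indicator_diff_bound i j :
  -1 <= centered_indicator i - centered_indicator j <= 1.
Proof. by rewrite /centered_indicator; case: (i == i0); case: (j == i0) => /=; lra. Qed.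

Lemma sum_sqr_centered_indicator_gt0 : (1 < q)%N -> 0 < \sum_i centered_indicator i ^+ 2.
Proof.
move=> q1; rewrite (bigD1 i0) //= ltr_pwDl ?sumr_ge0 // => [|i _]; last exact: sqr_ge0.
rewrite /centered_indicator eqxx exprn_gt0 // subr_gt0 invf_lt1 ?ltr1n //.
by rewrite ltr0n ltnW.
Qed.

End CenteredIndicator.

Lemma exists_margin {R : realType} (A C : R) : 0 < C < A ->
  exists2 e, 0 < e < 1 & (1 + e) * C < (1 - e) * A.
Proof.
move=> /andP[C0 CA]; have AC : 0 < A + C by lra.
exists ((A - C) / (2 * (A + C))); last first.
  rewrite -subr_gt0.
  have -> : (1 - (A - C) / (2 * (A + C))) * A - (1 + (A - C) / (2 * (A + C))) * C
      = (A - C) / 2 by field; rewrite gt_eqF.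
  lra.
rewrite divr_gt0 ?ltr_pdivrMr /=; lra.
Qed.

Theorem lemma27 (R : realType) (q Delta : nat) (B : R) :
  (3 <= q)%N -> (3 <= Delta)%N -> 0 <= B ->
  B < (Delta%:R - q%:R) / Delta%:R ->
  exists (a b : 'I_q -> R), is_prob a /\ is_prob b /\
    (Psi1 Delta B (@unif R q) (@unif R q) < Psi1 Delta B a b)%E.
Proof.
move=> q3 D3 B_ge0 hB.
have q_gt1 : (1 < q)%N by exact: leq_trans q3.
have D1 : (1 <= Delta)%N by exact: leq_trans D3.
have qR3 : 3 <= q%:R :> R by rewrite ler_nat.
have DR3 : 3 <= Delta%:R :> R by rewrite ler_nat.
have BD : B * Delta%:R < Delta%:R - q%:R by rewrite -ltr_pdivlMr //; lra.
have B_le1 : B <= 1 by nra.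
have [e /andP[e_gt0 e_lt1] margin] : exists2 e, 0 < e < 1 &
    (1 + e) * (Delta%:R * (q%:R - 1 + B)) < (1 - e) * (q%:R * (Delta%:R - 1)).
  by apply: exists_margin; apply/andP; split; nra.
have e_ge0 := ltW e_gt0.
pose s := centered_indicator (Ordinal (ltnW q_gt1)) : 'I_q -> R.
have s_sum0 : \sum_i s i = 0 := sum_centered_indicator _.
have s_bound : forall i, -1 <= s i <= 1 := centered_indicator_bound _.
have s_diff_bound : forall i j, -1 <= s i - s j <= 1 := centered_indicator_diff_bound _.
have S2_gt0 : 0 < \sum_i s i ^+ 2 := sum_sqr_centered_indicator_gt0 _ q_gt1.
exists (pert_prob s e), (pert_prob s (- e)).
split; [|split]; first by apply: (@pert_prob_is_prob _ _ e s) => //; apply/andP; split; lra.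
  by apply: (@pert_prob_is_prob _ _ e s) => //; apply/andP; split; lra.
exact: Psi1_unif_lt_pert.
Qed.
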